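(* Let $\gamma_1,\gamma_2,\gamma_3\in\mathbb{R}$ with $\gamma_3<0$ and $\gamma_1\ge 2|\gamma_3|$, $\gamma_2\ge 2|\gamma_3|$, and let $\mathcal{L}(X)=\frac12\sum_{k=1}^3\gamma_k(\sigma_kX\sigma_k-X)$ on $\mathcal{M}_2$. Then $e^{t\mathcal{L}}$ is a unital Schwarz map for every $t\ge 0$.
   Context: $\sigma_1,\sigma_2,\sigma_3$ are the Pauli matrices. A unital Schwarz map on $\mathcal{M}_n$ is a linear map $\Phi$ with $\Phi(\mathbb{1})=\mathbb{1}$ and $\Phi(X^\dagger X)\ge\Phi(X)^\dagger\Phi(X)$ for all $X\in\mathcal{M}_n$. The generator $\mathcal{L}$ is self-dual with respect to the Hilbert–Schmidt inner product. *)

From HB Require Import structures.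
From mathcomp Require Import all_boot all_order all_algebra.
From mathcomp Require Import all_classical all_reals.
From mathcomp Require Import topology normedtype sequences.
From mathcomp Require Import complex.
Set Implicit Arguments. Unset Strict Implicit. Unset Printing Implicit Defensive.
Import Order.TTheory GRing.Theory Num.Theory.
Import numFieldNormedType.Exports.
Local Open Scope ring_scope.
Local Open Scope complex_scope.

Definition adj (R : realType) m n (X : 'M[R[i]]_(m, n)) : 'M[R[i]]_(n, m) :=
  (map_mx Num.conj X)^T.

Definition sigma1 (R : realType) : 'M[R[i]]_2 :=
  \matrix_(i < 2, j < 2) (if i != j then 1 else 0).
Definition sigma2 (R : realType) : 'M[R[i]]_2 :=
  \matrix_(i < 2, j < 2)
    (if (val i == 0%N) && (val j == 1%N) then - 'i
     else if (val i == 1%N) && (val j == 0%N) then 'i else 0).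
Definition sigma3 (R : realType) : 'M[R[i]]_2 :=
  \matrix_(i < 2, j < 2)
    (if i == j then (if val i == 0%N then 1 else -1) else 0).

Definition lindblad (R : realType) (g1 g2 g3 : R) (X : 'M[R[i]]_2) : 'M[R[i]]_2 :=
  (2%:R)^-1 *:
    (  (g1%:C) *: (sigma1 R *m X *m sigma1 R - X)
     + (g2%:C) *: (sigma2 R *m X *m sigma2 R - X)
     + (g3%:C) *: (sigma3 R *m X *m sigma3 R - X)).

Definition exp_partial (R : realType) (L : 'M[R[i]]_2 -> 'M[R[i]]_2)
    (t : R) (N : nat) (X : 'M[R[i]]_2) : 'M[R[i]]_2 :=
  \sum_(n < N) ((t ^+ n / (n`!)%:R)%:C) *: iter n L X.

Definition expL (R : realType) (L : 'M[R[i]]_2 -> 'M[R[i]]_2) (t : R)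
    (X : 'M[R[i]]_2) : 'M[R[i]]_2 :=
  \matrix_(i < 2, j < 2)
    ((limn (fun N => complex.Re (exp_partial L t N X i j)))
       +i* (limn (fun N => complex.Im (exp_partial L t N X i j)))).

(* positive semidefinite: <v, A v> >= 0 for all vectors v
   (order of the num-closed field R[i]: real and nonnegative) *)
Definition psdmx (R : realType) n (A : 'M[R[i]]_n) : Prop :=
  forall v : 'cV[R[i]]_n, 0 <= (adj v *m A *m v) 0 0.

Definition mx_ge (R : realType) n (A B : 'M[R[i]]_n) : Prop := psdmx (A - B).

Definition unital_schwarz (R : realType) (Phi : 'M[R[i]]_2 -> 'M[R[i]]_2) : Prop :=
  (forall (a : R[i]) (X Y : 'M[R[i]]_2), Phi (a *: X + Y) = a *: Phi X + Phi Y)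
  /\ Phi 1%:M = 1%:M
  /\ (forall X : 'M[R[i]]_2, mx_ge (Phi (adj X *m X)) (adj (Phi X) *m Phi X)).

(* In the Pauli basis {1, sigma1, sigma2, sigma3} the generator is diagonal,
   L(sigma_k) = lambda_k sigma_k with lambda_1 = -(g2 + g3) etc., so e^{tL} multiplies the
   sigma_k-coordinate x_k of X by c_k = e^{t lambda_k}.  For such a map the Schwarz defect
   Phi(X^* X) - Phi(X)^* Phi(X) is a 1 + b . sigma with a = sum (1 - c_k^2) |x_k|^2 and
   b_i = -2 (c_i - c_j c_k) Im (x_j^* x_k), which is positive semidefinite iff |b| <= a.
   This holds as soon as (c_i - c_j c_k)^2 <= (1 - c_j^2)(1 - c_k^2) for all i.  With
   w = e^{t g3}, A = e^{-t (g1 + 2 g3)}, B = e^{-t (g2 + 2 g3)}, all in [0, 1] by the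
   hypotheses, one has c_1 = B w, c_2 = A w, c_3 = A B w^4, and each of the three
   conditions says that one and the same polynomial in A, B, w is nonnegative. *)

From HB Require Import structures.
From mathcomp Require Import all_boot all_order all_algebra.
From mathcomp Require Import all_classical all_reals.
From mathcomp Require Import topology normedtype sequences exp.
From mathcomp Require Import complex.
From mathcomp Require Import ring lra.
Import Order.TTheory GRing.Theory Num.Theory.
Import numFieldNormedType.Exports.
Set Implicit Arguments. Unset Strict Implicit. Unset Printing Implicit Defensive.
Local Open Scope classical_set_scope.
Local Open Scope ring_scope.
Local Open Scope complex_scope.
Local Notation Re := complex.Re.
Local Notation Im := complex.Im.

Section PauliDiagonal.
Variable R : realType.
Implicit Types (r : R) (x y z : R[i]).

Lemma complex_ext x y : Re x = Re y -> Im x = Im y -> x = y.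
Proof. by case: x; case: y => /= ? ? ? ? -> ->. Qed.

Lemma ReD x y : Re (x + y) = Re x + Re y. Proof. by case: x; case: y. Qed.
Lemma ImD x y : Im (x + y) = Im x + Im y. Proof. by case: x; case: y. Qed.
Lemma ReN x : Re (- x) = - Re x. Proof. by case: x. Qed.
Lemma ImN x : Im (- x) = - Im x. Proof. by case: x. Qed.
Lemma ReM x y : Re (x * y) = Re x * Re y - Im x * Im y. Proof. by case: x; case: y. Qed.
Lemma ImM x y : Im (x * y) = Re x * Im y + Im x * Re y.
Proof. by case: x => a b; case: y => c d /=; rewrite addrC. Qed.
Lemma ReJ x : Re (x^*) = Re x. Proof. by case: x. Qed.
Lemma ImJ x : Im (x^*) = - Im x. Proof. by case: x. Qed.
Lemma Re_realM r z : Re (r%:C * z) = r * Re z.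
Proof. by case: z => a b /=; rewrite mul0r subr0. Qed.
Lemma Im_realM r z : Im (r%:C * z) = r * Im z.
Proof. by case: z => a b /=; rewrite mul0r addr0. Qed.

Definition ReImE := (ReD, ImD, ReN, ImN, Re_realM, Im_realM, ReM, ImM, ReJ, ImJ).

Definition mx2 (a b c d : R[i]) : 'M[R[i]]_2 :=
  \matrix_(i < 2, j < 2) if val i == 0%N then (if val j == 0%N then a else b)
                         else (if val j == 0%N then c else d).

Lemma ord2P (i : 'I_2) : i = ord0 \/ i = ord_max.
Proof. by case: i => [[|[|//]] Hi]; [left|right]; apply: val_inj. Qed.

Lemma lift_ord0 : lift ord0 (ord0 : 'I_1) = ord_max :> 'I_2.
Proof. exact: val_inj. Qed.

Lemma mx2_ext (X Y : 'M[R[i]]_2) :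
  X ord0 ord0 = Y ord0 ord0 -> X ord0 ord_max = Y ord0 ord_max ->
  X ord_max ord0 = Y ord_max ord0 -> X ord_max ord_max = Y ord_max ord_max -> X = Y.
Proof.
by move=> ? ? ? ?; apply/matrixP => i j; case: (ord2P i) => ->; case: (ord2P j) => ->.
Qed.

Lemma mx2_eta (X : 'M[R[i]]_2) :
  X = mx2 (X ord0 ord0) (X ord0 ord_max) (X ord_max ord0) (X ord_max ord_max).
Proof. by apply: mx2_ext; rewrite mxE. Qed.

Lemma mx2_00 a b c d : mx2 a b c d ord0 ord0 = a. Proof. by rewrite mxE. Qed.
Lemma mx2_01 a b c d : mx2 a b c d ord0 ord_max = b. Proof. by rewrite mxE. Qed.
Lemma mx2_10 a b c d : mx2 a b c d ord_max ord0 = c. Proof. by rewrite mxE. Qed.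
Lemma mx2_11 a b c d : mx2 a b c d ord_max ord_max = d. Proof. by rewrite mxE. Qed.
Definition mx2E := (mx2_00, mx2_01, mx2_10, mx2_11).

Lemma mulmx2 a b c d a' b' c' d' :
  mx2 a b c d *m mx2 a' b' c' d' =
  mx2 (a * a' + b * c') (a * b' + b * d') (c * a' + d * c') (c * b' + d * d').
Proof.
by apply: mx2_ext; rewrite !mxE !big_ord_recl big_ord0 lift_ord0 !mxE !addr0.
Qed.

Lemma addmx2 a b c d a' b' c' d' :
  mx2 a b c d + mx2 a' b' c' d' = mx2 (a + a') (b + b') (c + c') (d + d').
Proof. by apply: mx2_ext; rewrite !mxE. Qed.

Lemma oppmx2 a b c d : - mx2 a b c d = mx2 (- a) (- b) (- c) (- d).
Proof. by apply: mx2_ext; rewrite !mxE. Qed.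

Lemma scalemx2 k a b c d : k *: mx2 a b c d = mx2 (k * a) (k * b) (k * c) (k * d).
Proof. by apply: mx2_ext; rewrite !mxE. Qed.

Lemma mx2_1 : 1%:M = mx2 1 0 0 1.
Proof. by apply: mx2_ext; rewrite !mxE. Qed.

Lemma adj_mx2 a b c d : adj (mx2 a b c d) = mx2 a^* c^* b^* d^*.
Proof. by apply: mx2_ext; rewrite !mxE. Qed.

Lemma sigma1E : sigma1 R = mx2 0 1 1 0.
Proof. by apply: mx2_ext; rewrite !mxE. Qed.
Lemma sigma2E : sigma2 R = mx2 0 (- 'i) 'i 0.
Proof. by apply: mx2_ext; rewrite !mxE. Qed.
Lemma sigma3E : sigma3 R = mx2 1 0 0 (-1).
Proof. by apply: mx2_ext; rewrite !mxE. Qed.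

Lemma sigma1_conj (X : 'M[R[i]]_2) :
  sigma1 R *m X *m sigma1 R =
  mx2 (X ord_max ord_max) (X ord_max ord0) (X ord0 ord_max) (X ord0 ord0).
Proof. by rewrite [X]mx2_eta sigma1E !mulmx2 !mx2E; congr mx2; ring. Qed.

Lemma sigma2_conj (X : 'M[R[i]]_2) :
  sigma2 R *m X *m sigma2 R =
  mx2 (X ord_max ord_max) (- X ord_max ord0) (- X ord0 ord_max) (X ord0 ord0).
Proof.
rewrite [X]mx2_eta sigma2E !mulmx2 !mx2E.
by congr mx2; apply: complex_ext; rewrite ?ReImE /=; ring.
Qed.

Lemma sigma3_conj (X : 'M[R[i]]_2) :
  sigma3 R *m X *m sigma3 R =
  mx2 (X ord0 ord0) (- X ord0 ord_max) (- X ord_max ord0) (X ord_max ord_max).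
Proof. by rewrite [X]mx2_eta sigma3E !mulmx2 !mx2E; congr mx2; ring. Qed.

(* Writing X = x0 + x1 sigma1 + x2 sigma2 + x3 sigma3, the map
   [pauli_diag m0 m1 m2 m3] multiplies the coordinate xk by mk. *)
Definition pauli_diag (m0 m1 m2 m3 : R) (X : 'M[R[i]]_2) : 'M[R[i]]_2 :=
  let a := X ord0 ord0 in let b := X ord0 ord_max in
  let c := X ord_max ord0 in let d := X ord_max ord_max in
  mx2 ((m0%:C + m3%:C) / 2 * a + (m0%:C - m3%:C) / 2 * d)
      ((m1%:C + m2%:C) / 2 * b + (m1%:C - m2%:C) / 2 * c)
      ((m1%:C - m2%:C) / 2 * b + (m1%:C + m2%:C) / 2 * c)
      ((m0%:C - m3%:C) / 2 * a + (m0%:C + m3%:C) / 2 * d).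

Lemma pauli_diag_comp m0 m1 m2 m3 n0 n1 n2 n3 X :
  pauli_diag m0 m1 m2 m3 (pauli_diag n0 n1 n2 n3 X) =
  pauli_diag (m0 * n0) (m1 * n1) (m2 * n2) (m3 * n3) X.
Proof. by rewrite /pauli_diag !mx2E !rmorphM; congr mx2; field. Qed.

Lemma pauli_diag1 X : pauli_diag 1 1 1 1 X = X.
Proof. by rewrite [RHS]mx2_eta /pauli_diag rmorph1; congr mx2; field. Qed.

Lemma pauli_diagD m0 m1 m2 m3 n0 n1 n2 n3 X :
  pauli_diag m0 m1 m2 m3 X + pauli_diag n0 n1 n2 n3 X =
  pauli_diag (m0 + n0) (m1 + n1) (m2 + n2) (m3 + n3) X.
Proof. by rewrite /pauli_diag addmx2 !rmorphD; congr mx2; field. Qed.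

Lemma pauli_diagZ r m0 m1 m2 m3 X :
  r%:C *: pauli_diag m0 m1 m2 m3 X = pauli_diag (r * m0) (r * m1) (r * m2) (r * m3) X.
Proof. by rewrite /pauli_diag scalemx2 !rmorphM; congr mx2; field. Qed.

Lemma pauli_diag0 X : pauli_diag 0 0 0 0 X = 0.
Proof. by apply: mx2_ext; rewrite !mxE rmorph0 subr0 addr0 !mul0r addr0. Qed.

Lemma pauli_diag_linear m0 m1 m2 m3 k X Y :
  pauli_diag m0 m1 m2 m3 (k *: X + Y) =
  k *: pauli_diag m0 m1 m2 m3 X + pauli_diag m0 m1 m2 m3 Y.
Proof. by rewrite /pauli_diag scalemx2 addmx2 !mxE; congr mx2; ring. Qed.

Lemma pauli_diag_unital m1 m2 m3 : pauli_diag 1 m1 m2 m3 1%:M = 1%:M.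
Proof. by rewrite mx2_1 /pauli_diag !mx2E rmorph1; congr mx2; field. Qed.

Lemma lindblad_pauli_diag (g1 g2 g3 : R) :
  lindblad g1 g2 g3 = pauli_diag 0 (- (g2 + g3)) (- (g1 + g3)) (- (g1 + g2)).
Proof.
apply/funext => X; rewrite /lindblad sigma1_conj sigma2_conj sigma3_conj [X]mx2_eta.
rewrite !(oppmx2, addmx2, scalemx2) /pauli_diag !mx2E !rmorphN !rmorphD rmorph0.
by congr mx2; field.
Qed.

Lemma iter_pauli_diag (m0 m1 m2 m3 : R) n X :
  iter n (pauli_diag m0 m1 m2 m3) X =
  pauli_diag (m0 ^+ n) (m1 ^+ n) (m2 ^+ n) (m3 ^+ n) X.
Proof.
elim: n => [|n IH]; first by rewrite !expr0 pauli_diag1.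
by rewrite iterS IH pauli_diag_comp !exprS.
Qed.

Lemma exp_partial_pauli_diag (m0 m1 m2 m3 t : R) N X :
  exp_partial (pauli_diag m0 m1 m2 m3) t N X =
  pauli_diag (series (exp_coeff (t * m0)) N) (series (exp_coeff (t * m1)) N)
             (series (exp_coeff (t * m2)) N) (series (exp_coeff (t * m3)) N) X.
Proof.
elim: N => [|N IH].
  by rewrite /exp_partial big_ord0 !seriesEord /= !big_ord0 pauli_diag0.
rewrite /exp_partial big_ord_recr /= -/(exp_partial _ _ _ _) IH iter_pauli_diag.
rewrite pauli_diagZ pauli_diagD !seriesSr; congr pauli_diag.
all: by rewrite /exp_coeff /= exprMn mulrAC.
Qed.

Lemma pauli_diag_decomp (m0 m1 m2 m3 : R) X :
  pauli_diag m0 m1 m2 m3 X =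
  m0%:C *: pauli_diag 1 0 0 0 X + m1%:C *: pauli_diag 0 1 0 0 X
  + m2%:C *: pauli_diag 0 0 1 0 X + m3%:C *: pauli_diag 0 0 0 1 X.
Proof. by rewrite !pauli_diagZ !pauli_diagD !mulr1 !mulr0 !addr0 !add0r. Qed.

Lemma limn_pauli_diag (u0 u1 u2 u3 : R ^nat) l0 l1 l2 l3 X :
  u0 @ \oo --> l0 -> u1 @ \oo --> l1 -> u2 @ \oo --> l2 -> u3 @ \oo --> l3 ->
  \matrix_(i < 2, j < 2)
     (limn (fun N => Re (pauli_diag (u0 N) (u1 N) (u2 N) (u3 N) X i j))
      +i* limn (fun N => Im (pauli_diag (u0 N) (u1 N) (u2 N) (u3 N) X i j)))
  = pauli_diag l0 l1 l2 l3 X.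
Proof.
move=> cu0 cu1 cu2 cu3; apply/matrixP => i j; rewrite mxE.
have cvg_entry (f : R[i] -> R) : (forall x y, f (x + y) = f x + f y) ->
    (forall r z, f (r%:C * z) = r * f z) ->
    (fun N => f (pauli_diag (u0 N) (u1 N) (u2 N) (u3 N) X i j)) @ \oo -->
    f (pauli_diag l0 l1 l2 l3 X i j).
  move=> fD fZ; rewrite pauli_diag_decomp !mxE !fD !fZ.
  under eq_fun do rewrite pauli_diag_decomp !mxE !fD !fZ.
  by apply: cvgD; [apply: cvgD; [apply: cvgD|]|]; apply: cvgMl.
rewrite (cvg_lim (@Rhausdorff R) (cvg_entry _ ReD Re_realM)).
rewrite (cvg_lim (@Rhausdorff R) (cvg_entry _ ImD Im_realM)).
by case: (pauli_diag l0 l1 l2 l3 X i j).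
Qed.

Lemma expL_pauli_diag (m0 m1 m2 m3 t : R) :
  expL (pauli_diag m0 m1 m2 m3) t =
  pauli_diag (expR (t * m0)) (expR (t * m1)) (expR (t * m2)) (expR (t * m3)).
Proof.
apply/funext => X; rewrite /expL.
rewrite (_ : exp_partial _ t = fun N Y => pauli_diag (series (exp_coeff (t * m0)) N)
   (series (exp_coeff (t * m1)) N) (series (exp_coeff (t * m2)) N)
   (series (exp_coeff (t * m3)) N) Y).
  (* expR x is defined as the limit of series (exp_coeff x). *)
  by apply: limn_pauli_diag; apply: is_cvg_series_exp_coeff.
by apply/funext => N; apply/funext => Y; apply: exp_partial_pauli_diag.
Qed.

(* a 1 + b1 sigma1 + b2 sigma2 + b3 sigma3 *)
Definition pauli_mx (a b1 b2 b3 : R) : 'M[R[i]]_2 :=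
  mx2 ((a + b3) +i* 0) (b1 -i* b2) (b1 +i* b2) ((a - b3) +i* 0).

Lemma dot3_sqr_le (b1 b2 b3 u1 u2 u3 : R) :
  (b1 * u1 + b2 * u2 + b3 * u3) ^+ 2 <=
  (b1 ^+ 2 + b2 ^+ 2 + b3 ^+ 2) * (u1 ^+ 2 + u2 ^+ 2 + u3 ^+ 2).
Proof.
rewrite -subr_ge0.
have -> : (b1 ^+ 2 + b2 ^+ 2 + b3 ^+ 2) * (u1 ^+ 2 + u2 ^+ 2 + u3 ^+ 2)
          - (b1 * u1 + b2 * u2 + b3 * u3) ^+ 2 =
          (b1 * u2 - b2 * u1) ^+ 2 + (b1 * u3 - b3 * u1) ^+ 2 + (b2 * u3 - b3 * u2) ^+ 2.
  by ring.
by rewrite !addr_ge0 ?sqr_ge0.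
Qed.

(* The quadratic form of [pauli_mx a b] at (x, y) is a n + b . u, where
   n = |x|^2 + |y|^2 and u = (2 Re (x^* y), 2 Im (x^* y), |x|^2 - |y|^2) has length n. *)
Lemma psd_pauli_mx (a b1 b2 b3 : R) :
  0 <= a -> b1 ^+ 2 + b2 ^+ 2 + b3 ^+ 2 <= a ^+ 2 -> psdmx (pauli_mx a b1 b2 b3).
Proof.
move=> a_ge0 b_le v.
rewrite !mxE !big_ord_recl !big_ord0 !mxE !big_ord_recl !big_ord0 lift_ord0.
rewrite !mx2E /adj !mxE !addr0.
move: (v ord0 0) (v ord_max 0) => x y.
set n := Re x ^+ 2 + Im x ^+ 2 + (Re y ^+ 2 + Im y ^+ 2).
set u1 := 2 * (Re x * Re y + Im x * Im y).
set u2 := 2 * (Re x * Im y - Im x * Re y).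
set u3 := Re x ^+ 2 + Im x ^+ 2 - (Re y ^+ 2 + Im y ^+ 2).
set q := (X in 0 <= X).
have -> : q = (a * n + (b1 * u1 + b2 * u2 + b3 * u3)) +i* 0.
  by apply: complex_ext; rewrite /q /n /u1 /u2 /u3 ?ReImE /=; ring.
rewrite lecE /= eqxx /=.
have u_len : u1 ^+ 2 + u2 ^+ 2 + u3 ^+ 2 = n ^+ 2 by rewrite /n /u1 /u2 /u3; ring.
have n_ge0 : 0 <= n by rewrite !addr_ge0 ?sqr_ge0.
have dot_le : (b1 * u1 + b2 * u2 + b3 * u3) ^+ 2 <= (a * n) ^+ 2.
  apply: le_trans (dot3_sqr_le _ _ _ _ _ _) _.
  by rewrite u_len exprMn ler_wpM2r ?sqr_ge0.
have an_ge0 : 0 <= a * n by rewrite mulr_ge0.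
nra.
Qed.

Lemma pauli_diag_mx2 (m0 m1 m2 m3 : R) a b c d :
  pauli_diag m0 m1 m2 m3 (mx2 a b c d) =
  mx2 (((m0 + m3) / 2)%:C * a + ((m0 - m3) / 2)%:C * d)
      (((m1 + m2) / 2)%:C * b + ((m1 - m2) / 2)%:C * c)
      (((m1 - m2) / 2)%:C * b + ((m1 + m2) / 2)%:C * c)
      (((m0 - m3) / 2)%:C * a + ((m0 + m3) / 2)%:C * d).
Proof.
by rewrite /pauli_diag !mx2E !(rmorphM, rmorphD, rmorphN, fmorphV, rmorph_nat).
Qed.

Definition schwarz_multipliers (c1 c2 c3 : R) : Prop :=
  [/\ 0 <= 1 - c1 ^+ 2, 0 <= 1 - c2 ^+ 2 & 0 <= 1 - c3 ^+ 2] /\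
  [/\ (c1 - c2 * c3) ^+ 2 <= (1 - c2 ^+ 2) * (1 - c3 ^+ 2),
      (c2 - c1 * c3) ^+ 2 <= (1 - c1 ^+ 2) * (1 - c3 ^+ 2) &
      (c3 - c1 * c2) ^+ 2 <= (1 - c1 ^+ 2) * (1 - c2 ^+ 2)].

Definition schwarz_defect (c1 c2 c3 p1 q1 p2 q2 p3 q3 : R) : 'M[R[i]]_2 :=
  pauli_mx ((1 - c1 ^+ 2) * (p1 ^+ 2 + q1 ^+ 2) + (1 - c2 ^+ 2) * (p2 ^+ 2 + q2 ^+ 2)
            + (1 - c3 ^+ 2) * (p3 ^+ 2 + q3 ^+ 2))
           (- 2 * (c1 - c2 * c3) * (p2 * q3 - p3 * q2))
           (- 2 * (c2 - c1 * c3) * (p3 * q1 - p1 * q3))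
           (- 2 * (c3 - c1 * c2) * (p1 * q2 - p2 * q1)).

(* pk + i qk is the sigma_k-coordinate of mx2 a b c d. *)
Lemma pauli_diag_schwarz_defect (c1 c2 c3 : R) a b c d :
  pauli_diag 1 c1 c2 c3 (adj (mx2 a b c d) *m mx2 a b c d)
  - adj (pauli_diag 1 c1 c2 c3 (mx2 a b c d)) *m pauli_diag 1 c1 c2 c3 (mx2 a b c d) =
  schwarz_defect c1 c2 c3 ((Re b + Re c) / 2) ((Im b + Im c) / 2)
    ((Im c - Im b) / 2) ((Re b - Re c) / 2) ((Re a - Re d) / 2) ((Im a - Im d) / 2).
Proof.
rewrite /schwarz_defect /pauli_mx adj_mx2 mulmx2 !pauli_diag_mx2 adj_mx2 mulmx2.
rewrite oppmx2 addmx2.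
by congr mx2; apply: complex_ext; rewrite ?ReImE /=; field.
Qed.

(* With ak = 1 - ck^2 the scalar part of the defect is P + Q, where P = sum ak pk^2 and
   Q = sum ak qk^2, and its vector part b satisfies
   |b|^2 <= 4 sum aj ak (pj qk - pk qj)^2 <= 4 P Q <= (P + Q)^2. *)
Lemma psd_schwarz_defect (c1 c2 c3 p1 q1 p2 q2 p3 q3 : R) :
  schwarz_multipliers c1 c2 c3 -> psdmx (schwarz_defect c1 c2 c3 p1 q1 p2 q2 p3 q3).
Proof.
case=> -[c1_le c2_le c3_le] [h1 h2 h3]; rewrite /schwarz_defect.
set a1 := 1 - c1 ^+ 2 in c1_le h2 h3 *; set a2 := 1 - c2 ^+ 2 in c2_le h1 h3 *.
set a3 := 1 - c3 ^+ 2 in c3_le h1 h2 *.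
set w1 := p2 * q3 - p3 * q2; set w2 := p3 * q1 - p1 * q3; set w3 := p1 * q2 - p2 * q1.
set P := a1 * p1 ^+ 2 + a2 * p2 ^+ 2 + a3 * p3 ^+ 2.
set Q := a1 * q1 ^+ 2 + a2 * q2 ^+ 2 + a3 * q3 ^+ 2.
have wsqr_ge0 (k r : R) : 0 <= k -> 0 <= k * r ^+ 2.
  by move=> k_ge0; rewrite mulr_ge0 ?sqr_ge0.
have P_ge0 : 0 <= P by rewrite /P !addr_ge0 ?wsqr_ge0.
have Q_ge0 : 0 <= Q by rewrite /Q !addr_ge0 ?wsqr_ge0.
have -> : a1 * (p1 ^+ 2 + q1 ^+ 2) + a2 * (p2 ^+ 2 + q2 ^+ 2) + a3 * (p3 ^+ 2 + q3 ^+ 2)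
          = P + Q by rewrite /P /Q; ring.
apply: psd_pauli_mx; first exact: addr_ge0.
have cross_le : a2 * a3 * w1 ^+ 2 + a1 * a3 * w2 ^+ 2 + a1 * a2 * w3 ^+ 2 <= P * Q.
  have -> : P * Q = a2 * a3 * w1 ^+ 2 + a1 * a3 * w2 ^+ 2 + a1 * a2 * w3 ^+ 2
                    + (a1 * p1 * q1 + a2 * p2 * q2 + a3 * p3 * q3) ^+ 2.
    by rewrite /P /Q /w1 /w2 /w3; ring.
  by rewrite lerDl sqr_ge0.
have coef_le : (c1 - c2 * c3) ^+ 2 * w1 ^+ 2 + (c2 - c1 * c3) ^+ 2 * w2 ^+ 2
               + (c3 - c1 * c2) ^+ 2 * w3 ^+ 2
               <= a2 * a3 * w1 ^+ 2 + a1 * a3 * w2 ^+ 2 + a1 * a2 * w3 ^+ 2.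
  by rewrite !lerD // ler_wpM2r ?sqr_ge0.
have am_gm : 4 * (P * Q) <= (P + Q) ^+ 2.
  by rewrite -subr_ge0 (_ : _ - _ = (P - Q) ^+ 2) ?sqr_ge0 //; ring.
apply: le_trans am_gm; rewrite !exprMn !sqrrN; lra.
Qed.

Lemma pauli_diag_unital_schwarz (c1 c2 c3 : R) :
  schwarz_multipliers c1 c2 c3 -> unital_schwarz (pauli_diag 1 c1 c2 c3).
Proof.
move=> hc; split; first exact: pauli_diag_linear.
split; first exact: pauli_diag_unital.
move=> X; rewrite /mx_ge [X]mx2_eta pauli_diag_schwarz_defect.
exact: psd_schwarz_defect.
Qed.

Lemma schwarz_multipliers_exp (A B w : R) :
  0 <= A <= 1 -> 0 <= B <= 1 -> 0 <= w <= 1 ->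
  schwarz_multipliers (B * w) (A * w) (A * B * w ^+ 4).
Proof.
move=> A01 B01 w01.
have mul01 (x y : R) : 0 <= x <= 1 -> 0 <= y <= 1 -> 0 <= x * y <= 1.
  by case/andP=> x_ge0 x_le1 /andP[y_ge0 y_le1]; rewrite mulr_ge0 ?mulr_ile1.
have sqr01 (x : R) : 0 <= x <= 1 -> 0 <= 1 - x ^+ 2.
  by case/andP=> x_ge0 x_le1; rewrite subr_ge0 exprn_ile1.
have w4_01 : 0 <= w ^+ 4 <= 1.
  by case/andP: w01 => w_ge0 w_le1; rewrite exprn_ge0 ?exprn_ile1.
(* The three Schwarz conditions all have the same gap F. *)
set F := (1 - A ^+ 2) * (1 - B ^+ 2) + A ^+ 2 * (1 - B ^+ 2) * (1 - w ^+ 2)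
  + B ^+ 2 * (1 - A ^+ 2) * (1 - w ^+ 2)
  + A ^+ 2 * B ^+ 2 * ((1 - w ^+ 2) ^+ 3 * (1 + w ^+ 2)).
have F_ge0 : 0 <= F.
  have a_ge0 := sqr01 _ A01; have b_ge0 := sqr01 _ B01; have u_ge0 := sqr01 _ w01.
  have v_ge0 : 0 <= (1 - w ^+ 2) ^+ 3 * (1 + w ^+ 2).
    exact: mulr_ge0 (exprn_ge0 3 u_ge0) (addr_ge0 ler01 (sqr_ge0 w)).
  have sA := sqr_ge0 A; have sB := sqr_ge0 B.
  rewrite /F; apply: addr_ge0; [apply: addr_ge0; [apply: addr_ge0|]|].
  - exact: mulr_ge0.
  - exact: mulr_ge0 (mulr_ge0 sA b_ge0) u_ge0.
  - exact: mulr_ge0 (mulr_ge0 sB a_ge0) u_ge0.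
  - exact: mulr_ge0 (mulr_ge0 sA sB) v_ge0.
split; first split.
- exact: sqr01 (mul01 _ _ B01 w01).
- exact: sqr01 (mul01 _ _ A01 w01).
- exact: sqr01 (mul01 _ _ (mul01 _ _ A01 B01) w4_01).
by split; rewrite -subr_ge0 (_ : _ - _ = F) ?F_ge0; rewrite /F; ring.
Qed.

End PauliDiagonal.

Theorem mainTheorem4 (R : realType) (g1 g2 g3 : R) :
  g3 < 0 -> 2 * `|g3| <= g1 -> 2 * `|g3| <= g2 ->
  forall t : R, 0 <= t -> unital_schwarz (expL (lindblad g1 g2 g3) t).
Proof.
move=> g3_lt0 g1_ge g2_ge t t_ge0; rewrite ltr0_norm // in g1_ge g2_ge.
set w := expR (t * g3).
set A := expR (- (t * (g1 + 2 * g3))); set B := expR (- (t * (g2 + 2 * g3))).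
have -> : expL (lindblad g1 g2 g3) t = pauli_diag 1 (B * w) (A * w) (A * B * w ^+ 4).
  rewrite lindblad_pauli_diag expL_pauli_diag mulr0 expR0.
  have -> : t * - (g2 + g3) = - (t * (g2 + 2 * g3)) + t * g3 by ring.
  have -> : t * - (g1 + g3) = - (t * (g1 + 2 * g3)) + t * g3 by ring.
  have -> : t * - (g1 + g2) =
            - (t * (g1 + 2 * g3)) + - (t * (g2 + 2 * g3)) + 4%:R * (t * g3) by ring.
  by rewrite !expRD expRM_natl.
apply/pauli_diag_unital_schwarz/schwarz_multipliers_exp; rewrite expR_ge0 expR_le1 //=.
- by rewrite oppr_le0 mulr_ge0 //; lra.
- by rewrite oppr_le0 mulr_ge0 //; lra.
- by rewrite mulr_ge0_le0 // ltW.
Qed.
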